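(* Let $i\geq1$, let $T$ be an SSRT of partition shape $\lambda$ such that $\lambda$ has an addable node in column $i+1$, and let $f_{i+1}(T)=T_{(r,i)}$. Define $T'$ by $T'_{(p,q)}=T_{(p,q)}$ if $q\neq i$; $T'_{(p,i)}=T_{(p,i)}$ if $p<r$; and $T'_{(p,i)}=T_{(p+1,i)}$ if $p\geq r$ (for those $p$ with $(p+1,i)\in\lambda$). Then $T'$ is an SSRT.
   Context: SSRTs (French convention: rows numbered bottom to top, $(p,q)$ = row $p$, column $q$): fillings of a partition shape with positive integers weakly decreasing along rows left to right and strictly decreasing along columns bottom to top. With $T_{(p,q)}=0$ for $(p,q)\notin\lambda$ and $T_{(0,q)}=\infty$, $f_{i+1}(T)$ is the entry $T_{(r,i)}$ where $r$ is the largest integer with $(r,i)\in\lambda$ and $T_{(r,i)}<T_{(r-1,i+1)}$; this is the first entry that moves horizontally in the backward jeu de taquin slide started at the addable node in column $i+1$ (at each step the empty box at $(p,q)$ is filled from whichever of $(p-1,q)$, $(p,q-1)$ holds the smaller entry, ties going to $(p-1,q)$). Thus $T'$ is obtained by removing $T_{(r,i)}$ and sliding the entries above it in column $i$ down one row. *)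

From mathcomp Require Import all_boot.
Set Implicit Arguments. Unset Strict Implicit. Unset Printing Implicit Defensive.

(* Partitions: lambda = [:: lambda_1; lambda_2; ...] (row lengths, row 1 is the
   bottom row in French convention), weakly decreasing, positive parts. *)
Definition is_partition (lam : seq nat) : bool :=
  sorted geq lam && all (fun x => 0 < x) lam.

(* (p,q) in lambda : row p (bottom to top, from 1), column q (from 1). *)
Definition in_shape (lam : seq nat) (p q : nat) : bool :=
  [&& 0 < p, p <= size lam, 0 < q & q <= nth 0 lam p.-1].

Definition addable (lam : seq nat) (p q : nat) : bool :=
  [&& 0 < p, 0 < q, ~~ in_shape lam p q,
      (p == 1) || in_shape lam p.-1 q & (q == 1) || in_shape lam p q.-1].

(* A filling is a function row -> column -> entry; T(p,q) = 0 off the shape. *)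
Definition filling := nat -> nat -> nat.

Definition is_SSRT (lam : seq nat) (T : filling) : Prop :=
  [/\ is_partition lam,
      (forall p q, in_shape lam p q -> 0 < T p q),
      (forall p q, ~~ in_shape lam p q -> T p q = 0),
      (forall p q, in_shape lam p q -> in_shape lam p q.+1 -> T p q.+1 <= T p q)
    & (forall p q, in_shape lam p q -> in_shape lam p.+1 q -> T p.+1 q < T p q)].

(* T_(r,i) < T_(r-1,i+1), with the convention T_(0,q) = infinity. *)
Definition lt_above (T : filling) (r i : nat) : bool :=
  (r == 1) || (T r i < T r.-1 i.+1).

(* r is the row such that f_{i+1}(T) = T_(r,i): the largest r with
   (r,i) in lambda and T_(r,i) < T_(r-1,i+1). *)
Definition f_row (lam : seq nat) (T : filling) (i r : nat) : Prop :=
  [/\ in_shape lam r i, lt_above T r i &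
      forall r', r < r' -> in_shape lam r' i -> ~~ lt_above T r' i].

Definition remove_slide (T : filling) (i r : nat) : filling :=
  fun p q => if (q == i) && (r <= p) then T p.+1 i else T p q.

(* Column [i] ends in a row [h] of length exactly [i] (the addable node of
   column [i+1] lies beside column [i]), so [(h, i)] is a removable corner and
   removing it leaves a partition.  Sliding the entries of column [i] above row
   [r] down by one keeps the column strictly decreasing, and each moved entry
   is at most its new left neighbour by column strictness.  It is at least its
   new right neighbour precisely because [r] is the last row of column [i] with
   [T (r, i) < T (r - 1, i + 1)]. *)

From mathcomp Require Import all_boot zify.

Set Implicit Arguments.
Unset Strict Implicit.
Unset Printing Implicit Defensive.

Lemma in_shape_nth lam p q :
  in_shape lam p q = [&& 0 < p, 0 < q & q <= nth 0 lam p.-1].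
Proof.
rewrite /in_shape; case: p => [|p] //=; case: (ltnP 0 q) => q0 /=; rewrite ?andbF //.
by case: ltnP => //= lep; rewrite nth_default // leqNgt q0.
Qed.

(* Removes the last cell of row [h] (rows counted from 1), dropping the row
   when it had a single cell. *)
Definition remove_corner (lam : seq nat) (h : nat) : seq nat :=
  mkseq (fun k => if k == h.-1 then (nth 0 lam k).-1 else nth 0 lam k)
        (size lam - (nth 0 lam h.-1 == 1)).

Section Partitions.

Variable lam : seq nat.
Hypothesis lam_part : is_partition lam.

Lemma partition_nth_le a b : a <= b -> nth 0 lam b <= nth 0 lam a.
Proof.
move=> le_ab; case: (ltnP b (size lam)) => [lt_b|ge_b]; last by rewrite nth_default.
case/andP: lam_part => sorted_lam _.
apply: (sorted_leq_nth (rev_trans leq_trans) leqnn) => //; rewrite inE //.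
exact: leq_ltn_trans lt_b.
Qed.

Lemma partition_nth_gt0 k : (0 < nth 0 lam k) = (k < size lam).
Proof.
case: (ltnP k (size lam)) => [lt_k|ge_k]; last by rewrite nth_default.
by case/andP: lam_part => _ /all_nthP; apply.
Qed.

Lemma exists_corner_row p q :
  in_shape lam p q -> ~~ in_shape lam p q.+1 ->
  exists2 h, nth 0 lam h.-1 = q & nth 0 lam h < q.
Proof.
move=> in_pq out_pq.
have bounded k : in_shape lam k q -> k <= size lam by case/and4P.
have [h in_hq max_h] := ex_maxnP (ex_intro _ p in_pq) bounded.
have le_ph := max_h p in_pq.
move: in_pq out_pq in_hq; rewrite !in_shape_nth /= => /and3P[p0 q0 _] out /and3P[h0 _ le_qh].
exists h.
  have le_nth : nth 0 lam h.-1 <= nth 0 lam p.-1 by apply: partition_nth_le; lia.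
  by move: out; rewrite p0 /=; lia.
rewrite ltnNge; apply/negP => le_q.
by have := max_h h.+1; rewrite in_shape_nth /= q0 le_q /=; lia.
Qed.

(* Row [h + 1] is shorter than row [h]; as [nth] returns [0] past the end,
   this includes the case where [h] is the top row. *)
Variable h : nat.
Hypothesis corner : nth 0 lam h < nth 0 lam h.-1.

Lemma corner_row_gt0 : 0 < h.
Proof. by apply: contraLR corner; rewrite -leqNgt leqn0 => /eqP ->; rewrite ltnn. Qed.

Lemma corner_row_le_size : h <= size lam.
Proof.
by rewrite -(prednK corner_row_gt0) -partition_nth_gt0 (leq_ltn_trans _ corner).
Qed.

Lemma in_shape_corner_col p : in_shape lam p (nth 0 lam h.-1) = (0 < p <= h).
Proof.
rewrite in_shape_nth (leq_ltn_trans _ corner) //=.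
case: (ltnP 0 p) => //= p0; apply/idP/idP => [le_c|le_ph].
  rewrite leqNgt; apply/negP => lt_hp.
  have le_hp : h <= p.-1 by lia.
  by move: (leq_ltn_trans (partition_nth_le le_hp) corner); rewrite ltnNge le_c.
by apply: partition_nth_le; lia.
Qed.

Lemma corner_row_last : nth 0 lam h.-1 = 1 -> h = size lam.
Proof.
move=> row1; apply/eqP; rewrite eqn_leq corner_row_le_size leqNgt -partition_nth_gt0.
by move: corner; rewrite row1; lia.
Qed.

Lemma nth_remove_corner k :
  nth 0 (remove_corner lam h) k = if k == h.-1 then (nth 0 lam k).-1 else nth 0 lam k.
Proof.
rewrite /remove_corner; case: (ltnP k (size lam - (nth 0 lam h.-1 == 1))) => [lt_k|ge_k].
  by rewrite nth_mkseq.
rewrite nth_default ?size_mkseq //.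
case: (ltnP k (size lam)) => [lt_k|ge_k']; last by rewrite nth_default ?if_same.
have row1 : nth 0 lam h.-1 = 1 by move: ge_k; case: eqP => //; lia.
have k_eq : k = h.-1 by rewrite (corner_row_last row1); move: ge_k; rewrite row1 eqxx; lia.
by rewrite k_eq eqxx row1.
Qed.

Lemma in_shape_remove_corner p q :
  in_shape (remove_corner lam h) p q =
  in_shape lam p q && ~~ ((p == h) && (q == nth 0 lam h.-1)).
Proof.
rewrite !in_shape_nth nth_remove_corner.
case: (ltnP 0 p) => p0 //=; case: (ltnP 0 q) => q0 //=.
case: (eqVneq p h) => [->|ne_ph] /=; first by rewrite eqxx; lia.
by rewrite andbT (_ : p.-1 == h.-1 = false) //; apply/eqP; have := corner_row_gt0; lia.
Qed.

Lemma remove_corner_partition : is_partition (remove_corner lam h).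
Proof.
apply/andP; split.
  apply/(sortedP 0) => k _; rewrite /= !nth_remove_corner.
  have corner' : nth 0 lam (h.-1).+1 < nth 0 lam h.-1 by rewrite prednK ?corner_row_gt0.
  move: corner' (partition_nth_le (leqnSn k)).
  by case: eqP => [<-|_]; case: eqP => [<-|_]; lia.
apply/(all_nthP 0) => k; rewrite size_mkseq nth_remove_corner /=.
case: (eqVneq k h.-1) => [->|_] lt_k; last by rewrite partition_nth_gt0; lia.
case: (eqVneq (nth 0 lam h.-1) 1) => [row1|ne1]; last by move: corner; lia.
move: lt_k; rewrite row1 eqxx -(corner_row_last row1).
by have := corner_row_gt0; lia.
Qed.

End Partitions.

Section RemoveSlide.

Variables (lam : seq nat) (T : filling) (h i r : nat).
Hypothesis T_SSRT : is_SSRT lam T.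
Hypothesis row_h : nth 0 lam h.-1 = i.
Hypothesis corner : nth 0 lam h < i.
Hypothesis r_gt0 : 0 < r.
Hypothesis r_le_h : r <= h.
Hypothesis slide_le : forall p, r <= p < h -> T p i.+1 <= T p.+1 i.

Let in_col p : in_shape lam p i = (0 < p <= h).
Proof.
case: T_SSRT => lam_part _ _ _ _.
by rewrite -{1}row_h in_shape_corner_col // row_h.
Qed.

Let in_shape_mu p q :
  in_shape (remove_corner lam h) p q = in_shape lam p q && ~~ ((p == h) && (q == i)).
Proof. by case: T_SSRT => lam_part _ _ _ _; rewrite in_shape_remove_corner ?row_h. Qed.

Lemma remove_slide_gt0 p q :
  in_shape (remove_corner lam h) p q -> 0 < remove_slide T i r p q.
Proof.
case: T_SSRT => _ T_pos _ _ _; rewrite in_shape_mu /remove_slide.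
case: (eqVneq q i) => [->|_] /andP[in_lam not_corner] /=; last exact: T_pos.
case: (leqP r p) => _; apply: T_pos; move: in_lam not_corner; rewrite !in_col andbT; lia.
Qed.

Lemma remove_slide_eq0 p q :
  ~~ in_shape (remove_corner lam h) p q -> remove_slide T i r p q = 0.
Proof.
case: T_SSRT => _ _ T_zero _ _; rewrite in_shape_mu /remove_slide.
case: (eqVneq q i) => [->|_] /=; rewrite ?andbF /= ?andbT; last exact: T_zero.
by rewrite in_col => out; case: (leqP r p) => ?; apply: T_zero; rewrite in_col; lia.
Qed.

Lemma remove_slide_row p q :
  in_shape (remove_corner lam h) p q -> in_shape (remove_corner lam h) p q.+1 ->
  remove_slide T i r p q.+1 <= remove_slide T i r p q.
Proof.
case: T_SSRT => _ _ _ T_row T_col; have T_row_pq := T_row p q.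
rewrite !in_shape_mu /remove_slide; case: (eqVneq q i) => [->|_].
  rewrite (gtn_eqF (ltnSn i)) !andbT => /andP[in_pi p_ne] /andP[in_row _] /=.
  case: (leqP r p) => [le_rp|_]; last exact: T_row.
  by apply: slide_le; move: in_pi p_ne; rewrite in_col; lia.
case: (eqVneq q.+1 i) => [e|_] /=; last by move=> /andP[+ _] /andP[+ _]; exact: T_row.
move: T_row_pq; rewrite e in_col andbT => T_row_pq /andP[in_pq _] p_col.
have T_col_p := T_col p i; rewrite !in_col in T_col_p.
have T_row_le := T_row_pq in_pq.
by case: (leqP r p) => ?; lia.
Qed.

Lemma remove_slide_col p q :
  in_shape (remove_corner lam h) p q -> in_shape (remove_corner lam h) p.+1 q ->
  remove_slide T i r p.+1 q < remove_slide T i r p q.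
Proof.
case: T_SSRT => _ _ _ _ T_col; rewrite !in_shape_mu /remove_slide.
case: (eqVneq q i) => [->|_] /=; last by move=> /andP[+ _] /andP[+ _]; exact: T_col.
have T_col_p := T_col p i; have T_col_p1 := T_col p.+1 i.
rewrite !in_col !andbT in T_col_p T_col_p1 *.
by move=> col_p col_p1; case: (leqP r p) => ?; case: (leqP r p.+1) => ?; lia.
Qed.

Lemma remove_slide_SSRT : is_SSRT (remove_corner lam h) (remove_slide T i r).
Proof.
split; [|exact: remove_slide_gt0|exact: remove_slide_eq0|exact: remove_slide_row|
        exact: remove_slide_col].
by case: T_SSRT => lam_part _ _ _ _; apply: remove_corner_partition => //; rewrite row_h.
Qed.

End RemoveSlide.

Theorem lemma6p1 (lam : seq nat) (T : filling) (i r : nat) :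
  1 <= i ->
  is_SSRT lam T ->
  (exists p, addable lam p i.+1) ->
  f_row lam T i r ->
  exists mu : seq nat, is_SSRT mu (remove_slide T i r).
Proof.
move=> i_gt0 T_SSRT [p addable_p] [in_ri _ r_max].
have lam_part : is_partition lam by case: T_SSRT.
have [in_pi out_pi] : in_shape lam p i /\ ~~ in_shape lam p i.+1.
  by case/and5P: addable_p => _ _ out _; rewrite eqSS gtn_eqF.
have [h row_h corner] := exists_corner_row lam_part in_pi out_pi.
have in_col k : in_shape lam k i = (0 < k <= h).
  by rewrite -{1}row_h in_shape_corner_col // row_h.
have /andP[r_gt0 r_le_h] : 0 < r <= h by rewrite -in_col.
exists (remove_corner lam h); apply: (remove_slide_SSRT T_SSRT row_h corner r_gt0 r_le_h).
move=> k /andP[le_rk lt_kh]; have := r_max k.+1 le_rk.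
by rewrite in_col lt_kh /lt_above negb_or -leqNgt => /(_ isT) /andP[].
Qed.
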